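(* Let $G=(V,E)$ be a nice graph with $V=\{1,\dots,n\}$, and let $K\in\mathbb{N}^E$. The following are equivalent: (1) $K$ is sufficient for $G$; (2) $\langle H_E^{K'},Q_E\rangle\neq 0$ for some $K'\in\mathbb{N}^E_{|E|}$ with $K'\le K$; (3) $\langle F,Q_E\rangle\neq0$ for some $F\in W^K_{E,|E|}$; (4) $\mathrm{per}(C_G(K'))\neq 0$ for some $K'\in\mathbb{N}^E_{|E|}$ with $K'\le K$.
   Context: All graphs are finite and simple; an edge is a $2$-subset $\{i,j\}$ of $V$; $E(i)$ is the set of edges incident to $i$; a graph is nice if it has no edge both of whose endpoints have degree $1$. For a finite set $E$, $\mathbb{N}^E$ is the set of maps $E\to\mathbb{N}$ and $\mathbb{N}^E_m=\{K\in\mathbb{N}^E:\sum_eK(e)=m\}$; $K\le K'$ means $K(e)\le K'(e)$ for all $e$; $K!=\prod_e K(e)!$; $x^K=\prod_e x_e^{K(e)}$. $P_G=\prod_{\{i,j\}\in E,\ i<j}(\sum_{e\in E(i)}x_e-\sum_{e\in E(j)}x_e)$ in variables $x_e$, $e\in E$; $\mathrm{mon}(P)$ is the set of monomials with nonzero coefficient in $P$. $K\in\mathbb{N}^E$ is sufficient for $G$ if there exists $K'\in\mathbb{N}^E_{|E|}$ with $K'\le K$ and $x^{K'}\in\mathrm{mon}(P_G)$. In the polynomial ring $\mathbb{C}[x_1,\dots,x_n]$ (one variable per vertex) define $Q_E=\prod_{\{i,j\}\in E,\ i<j}(x_i-x_j)$ and, for $K\in\mathbb{N}^E$, $H_E^K=\prod_{\{i,j\}\in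 E,\ i<j}(x_i+x_j)^{K(\{i,j\})}$. On homogeneous polynomials of degree $m$ in $x_1,\dots,x_n$ define the inner product $\langle f,g\rangle=\sum_{K\in\mathbb{N}^n_m}K!\,\mathrm{coe}(x^K,f)\overline{\mathrm{coe}(x^K,g)}$, where $\mathrm{coe}(x^K,f)$ is the coefficient of $x^K$ in $f$. $W^K_{E,m}$ is the complex linear span of $\{H_E^{K'}:K'\le K,\ K'\in\mathbb{N}^E_m\}$. $C_G=(c_{ee'})_{e,e'\in E}$ where for $e=\{i,j\}$, $i<j$: $c_{ee'}=1$ if $e'\ne e$ shares the vertex $i$ with $e$, $c_{ee'}=-1$ if $e'\neq e$ shares the vertex $j$ with $e$, and $c_{ee'}=0$ otherwise. For $K'\in\mathbb{N}^E_{|E|}$, $C_G(K')$ is the $|E|\times|E|$ matrix whose columns consist of $K'(e)$ copies of the column of $C_G$ indexed by $e$, for each $e\in E$. $\mathrm{per}$ denotes the permanent. *)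

From mathcomp Require Import all_boot all_order all_algebra all_fingroup.
From mathcomp Require Import complex Rstruct.
From mathcomp Require Import mpoly.

Set Implicit Arguments.
Unset Strict Implicit.
Unset Printing Implicit Defensive.

Import Order.TTheory GRing.Theory Num.Theory.
Local Open Scope ring_scope.

Definition CC : numClosedFieldType := (Rdefinitions.R)[i].

(* A graph on V = {1,..,n} is encoded with vertex type 'I_n (vertex k+1 is
   the ordinal k, so the order on vertices is preserved).  An edge {i,j} with
   i < j is encoded as the ordered pair (i,j); E : {set 'I_n * 'I_n} with
   every element satisfying e.1 < e.2 (hypothesis [simple_graph E]). *)
Definition simple_graph n (E : {set 'I_n * 'I_n}) : Prop :=
  forall e, e \in E -> (e.1 < e.2)%N.

Definition edge n (E : {set 'I_n * 'I_n}) := {e : 'I_n * 'I_n | e \in E}.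

Definition incident n (v : 'I_n) (f : 'I_n * 'I_n) : bool :=
  (f.1 == v) || (f.2 == v).

Definition degree n (E : {set 'I_n * 'I_n}) (v : 'I_n) : nat :=
  #|[set f in E | incident v f]|.

Definition nice n (E : {set 'I_n * 'I_n}) : Prop :=
  forall e, e \in E -> ~ (degree E e.1 = 1%N /\ degree E e.2 = 1%N).

Definition leK n (E : {set 'I_n * 'I_n}) (K1 K2 : {ffun edge E -> nat}) : bool :=
  [forall e, (K1 e <= K2 e)%N].

Definition sumK n (E : {set 'I_n * 'I_n}) (K : {ffun edge E -> nat}) : nat :=
  (\sum_(e : edge E) K e)%N.

Definition xvar n (E : {set 'I_n * 'I_n}) (e : edge E)
  : {mpoly int[#|{: edge E}|]} := 'X_(enum_rank e).

Definition P_G n (E : {set 'I_n * 'I_n}) : {mpoly int[#|{: edge E}|]} :=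
  \prod_(e : edge E)
     (\sum_(f : edge E | incident (val e).1 (val f)) xvar f
      - \sum_(f : edge E | incident (val e).2 (val f)) xvar f).

Definition monE n (E : {set 'I_n * 'I_n}) (K : {ffun edge E -> nat})
  : 'X_{1.. #|{: edge E}|} :=
  [multinom K (enum_val i) | i < #|{: edge E}|].

Definition sufficient n (E : {set 'I_n * 'I_n}) (K : {ffun edge E -> nat}) : Prop :=
  exists K' : {ffun edge E -> nat},
    [/\ sumK K' = #|E|, leK K' K & (P_G E)@_(monE K') != 0].

Definition Q_E n (E : {set 'I_n * 'I_n}) : {mpoly CC[n]} :=
  \prod_(e : edge E) ('X_((val e).1) - 'X_((val e).2)).

Definition H_E n (E : {set 'I_n * 'I_n}) (K : {ffun edge E -> nat})
  : {mpoly CC[n]} :=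
  \prod_(e : edge E) ('X_((val e).1) + 'X_((val e).2)) ^+ K e.

Definition mfact n (m : 'X_{1..n}) : nat := (\prod_(i < n) (m i)`!)%N.

Definition ip n (d : nat) (f g : {mpoly CC[n]}) : CC :=
  \sum_(m : 'X_{1..n < d.+1} | mdeg m == d)
     (mfact m)%:R * f@_m * Num.conj (g@_m).

(* W^K_{E,d}: complex linear span of the H_E^{K'}, K' <= K, |K'| = d *)
Definition in_W n (E : {set 'I_n * 'I_n}) (K : {ffun edge E -> nat}) (d : nat)
  (F : {mpoly CC[n]}) : Prop :=
  exists s : seq (CC * {ffun edge E -> nat}),
    all (fun p => leK p.2 K && (sumK p.2 == d)) s /\
    F = \sum_(p <- s) p.1 *: H_E p.2.

Definition cG n (E : {set 'I_n * 'I_n}) (e e' : edge E) : int :=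
  if e' == e then 0
  else if incident (val e).1 (val e') then 1
  else if incident (val e).2 (val e') then -1
  else 0.

Definition per (R : comPzRingType) k (A : 'M[R]_k) : R :=
  \sum_(s : 'S_k) \prod_(i < k) A i (s i).

(* columns of C_G(K'): K'(e) copies of column e, edges in enum order *)
Definition col_edges n (E : {set 'I_n * 'I_n}) (K : {ffun edge E -> nat})
  : seq (edge E) :=
  flatten [seq nseq (K e) e | e <- enum {: edge E}].

Definition C_GK n (E : {set 'I_n * 'I_n}) (K : {ffun edge E -> nat})
  : 'M[int]_#|{: edge E}| :=
  \matrix_(i, j) cG (enum_val i) (nth (enum_val j) (col_edges K) j).

From mathcomp Require Import all_boot all_order all_algebra all_fingroup.
From mathcomp Require Import complex Rstruct.
From mathcomp Require Import mpoly.

Set Implicit Arguments.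
Unset Strict Implicit.
Unset Printing Implicit Defensive.

Import GRing.Theory Num.Theory.
Local Open Scope ring_scope.

(* For K' with |K'| = |E| the three numbers
     K'! * coeff(x^K', P_G),      <H_E^K', Q_E>,      per C_G(K')
   are equal, so they vanish together; as K'! <> 0 this gives (1) <-> (2)
   <-> (4), and (2) <-> (3) because <., Q_E> is linear and W^K_(E,|E|) is
   spanned by the H_E^K'.
   The equality rests on one general identity (Wick's formula): for the
   inner product <f, g> = sum_m m! f_m conj(g_m) on forms of degree d,
   multiplication by x_i is adjoint to d/dx_i, hence the inner product of
   two products of d linear forms is the permanent of the d x d matrix of
   inner products of their coefficient vectors.  Both pairs (H_E^K', Q_E)
   and (x^K', P_G) are such products, and both matrices are C_G(K')^T. *)

Section InnerProduct.
Variables (n d : nat).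
Implicit Types (f g : {mpoly CC[n]}).

Lemma ipD f1 f2 g : ip d (f1 + f2) g = ip d f1 g + ip d f2 g.
Proof.
by rewrite /ip -big_split; apply: eq_bigr => m _; rewrite mcoeffD mulrDr mulrDl.
Qed.

Lemma ipZ c f g : ip d (c *: f) g = c * ip d f g.
Proof.
by rewrite /ip mulr_sumr; apply: eq_bigr => m _; rewrite mcoeffZ !mulrA [_ * c]mulrC.
Qed.

Lemma ip0 g : ip d 0 g = 0.
Proof. by rewrite /ip big1 // => m _; rewrite mcoeff0 mulr0 mul0r. Qed.

Lemma ip_sum (I : Type) (r : seq I) (P : pred I) (F : I -> {mpoly CC[n]}) g :
  ip d (\sum_(i <- r | P i) F i) g = \sum_(i <- r | P i) ip d (F i) g.
Proof.
elim: r => [|i r IH]; first by rewrite !big_nil ip0.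
by rewrite !big_cons; case: (P i); rewrite ?ipD IH.
Qed.

Lemma ipDr f g1 g2 : ip d f (g1 + g2) = ip d f g1 + ip d f g2.
Proof.
by rewrite /ip -big_split; apply: eq_bigr => m _; rewrite mcoeffD rmorphD mulrDr.
Qed.

Lemma ipZr c f g : ip d f (c *: g) = c^* * ip d f g.
Proof.
by rewrite /ip mulr_sumr; apply: eq_bigr => m _; rewrite mcoeffZ rmorphM mulrCA.
Qed.

Lemma ip0r f : ip d f 0 = 0.
Proof. by rewrite /ip big1 // => m _; rewrite mcoeff0 rmorph0 mulr0. Qed.

Lemma ip_sumr (I : Type) (r : seq I) (P : pred I) (F : I -> {mpoly CC[n]}) f :
  ip d f (\sum_(i <- r | P i) F i) = \sum_(i <- r | P i) ip d f (F i).
Proof.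
elim: r => [|i r IH]; first by rewrite !big_nil ip0r.
by rewrite !big_cons; case: (P i); rewrite ?ipDr IH.
Qed.

Lemma ip_monomial (M : 'X_{1..n}) g :
  mdeg M = d -> ip d 'X_[M] g = (mfact M)%:R * (g@_M)^*.
Proof.
move=> degM; have boundM : (mdeg M < d.+1)%N by rewrite degM.
rewrite /ip (bigD1 (BMultinom boundM)) /=; last by rewrite degM.
rewrite mcoeffX eqxx mulr1 big1 ?addr0 // => m /andP [_ neM].
rewrite mcoeffX (_ : (M == bmnm m) = false) ?mulr0 ?mul0r //.
by apply/negbTE; apply: contra neM => /eqP eM; apply/eqP/val_inj; rewrite /= eM.
Qed.

End InnerProduct.

Lemma ip_one n : ip 0 (1 : {mpoly CC[n]}) 1 = 1.
Proof.
have -> : (1 : {mpoly CC[n]}) = 'X_[0%MM] by rewrite mpolyX0.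
rewrite ip_monomial ?mdeg0 // mcoeffX eqxx conjC1 mulr1.
by rewrite /mfact big1 // => i _; rewrite mnm0E.
Qed.

Lemma mfact_neq0 n (m : 'X_{1..n}) : (mfact m)%:R != 0 :> CC.
Proof.
by rewrite pnatr_eq0 -lt0n /mfact prodn_gt0 // => i; exact: fact_gt0.
Qed.

(* The monomials m of degree d+1 with
   m_i > 0 correspond bijectively to the monomials of degree d via m - U_i. *)
Section Adjoint.
Variables (n : nat) (i : 'I_n).
Implicit Types (f g : {mpoly CC[n]}).

Lemma mfactU (m : 'X_{1..n}) : mfact (m + U_(i))%MM = (mfact m * (m i).+1)%N.
Proof.
rewrite /mfact (bigD1 i) //= [in RHS](bigD1 i) //= mnmDE mnm1E eqxx addn1 factS.
rewrite (eq_bigr (fun k => (m k)`!)); last first.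
  by move=> k /negbTE ki; rewrite mnmDE mnm1E eq_sym ki addn0.
by rewrite [RHS]ssrnat.mulnC ssrnat.mulnA.
Qed.

Lemma mcoeff_mulX_eq0 f (m : 'X_{1..n}) : m i = 0%N -> ('X_i * f)@_m = 0.
Proof.
move=> mi0; rewrite mulrC; apply: memN_msupp_eq0; apply/negP => /=.
rewrite (perm_mem (msuppMX f U_(i))) => /mapP [m' _ em].
by move: mi0; rewrite em mnmDE mnm1E eqxx.
Qed.

Lemma bmnm_addU_bound d (j : 'X_{1..n < d.+1}) : (mdeg (bmnm j + U_(i))%MM < d.+2)%N.
Proof. by rewrite mdegD mdeg1 addn1 ltnS; exact: bmdeg. Qed.

Definition bmnm_addU d (j : 'X_{1..n < d.+1}) : 'X_{1..n < d.+2} :=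
  BMultinom (@bmnm_addU_bound d j).
Definition bmnm_subU d (m : 'X_{1..n < d.+2}) : 'X_{1..n < d.+1} :=
  insubd (@bm0 n d) (bmnm m - U_(i))%MM.

Lemma ip_mulX d f g : ip d.+1 ('X_i * f) g = ip d f g^`M(i).
Proof.
rewrite /ip (bigID (fun m : 'X_{1..n < d.+2} => bmnm m i == 0%N)) /=.
rewrite big1 ?add0r; last first.
  by move=> m /andP [_ /eqP mi0]; rewrite mcoeff_mulX_eq0 // mulr0 mul0r.
rewrite (reindex_onto (@bmnm_addU d) (@bmnm_subU d)) /=; last first.
  move=> m /andP [/eqP degm mi]; apply: val_inj => /=.
  have Um : (U_(i) <= bmnm m)%MM by rewrite lep1mP.
  have degmU : mdeg (bmnm m - U_(i))%MM = d.
    have := mdegD (bmnm m - U_(i))%MM U_(i).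
    by rewrite submK // mdeg1 degm addn1 => /succn_inj.
  by rewrite /bmnm_subU insubdK ?submK // unfold_in /= degmU.
apply: eq_big => [j | j _].
  rewrite /= mdegD mdeg1 addn1 eqSS mnmDE mnm1E eqxx addn1 /= andbT.
  case: (mdeg j =P d) => //= degj; apply/eqP; apply: val_inj => /=.
  by rewrite /bmnm_subU insubdK /= ?addmK // unfold_in /=; exact: bmdeg.
have coefXf : ('X_i * f)@_(bmnm j + U_(i)) = f@_(bmnm j).
  by rewrite mulrC addmC mcoeffMX.
rewrite /= mfactU mcoeff_deriv coefXf rmorphMn natrM mulr_natr.
by rewrite mulrnAr -!mulrnAl.
Qed.

End Adjoint.

Lemma per_tr (R : comPzRingType) k (A : 'M[R]_k) : per A^T = per A.
Proof.
rewrite /per (reindex_inj invg_inj) /=; apply: eq_bigr => s _.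
by rewrite (reindex_perm s) /=; apply: eq_bigr => i _; rewrite mxE permK.
Qed.

Lemma per_map (R S : comPzRingType) (f : {rmorphism R -> S}) k (A : 'M[R]_k) :
  per (map_mx f A) = f (per A).
Proof.
rewrite /per rmorph_sum; apply: eq_bigr => s _.
by rewrite rmorph_prod; apply: eq_bigr => i _; rewrite mxE.
Qed.

Lemma sum_perm_lift0 (R : nmodType) d (F : 'S_d.+1 -> R) :
  \sum_(s : 'S_d.+1) F s = \sum_(j < d.+1) \sum_(t : 'S_d) F (lift_perm ord0 j t).
Proof.
rewrite (partition_big (fun s : 'S_d.+1 => s ord0) xpredT) //=.
apply: eq_bigr => j _; rewrite (reindex (lift_perm ord0 j)); last first.
  (* the restriction of s to the complements of 0 and of s 0 *)
  pose restr (s : 'S_d.+1) (k : 'I_d) : 'I_d :=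
    odflt k (unlift (s ord0) (s (lift ord0 k))).
  have restrK (s : 'S_d.+1) (k : 'I_d) : lift (s ord0) (restr s k) = s (lift ord0 k).
    rewrite /restr; have:= neq_lift ord0 k.
    by rewrite -(can_eq (permK s)) => /unlift_some[] ? ? ->.
  have restr_inj (s : 'S_d.+1) : injective (restr s).
    apply: can_inj (fun k => odflt k (unlift ord0 (s^-1%g (lift (s ord0) k)))) _.
    by move=> k; rewrite restrK permK liftK.
  exists (fun s => perm (restr_inj s)) => [t _ | s /eqP s0].
    by apply/permP => k; rewrite permE /restr lift_perm_lift lift_perm_id liftK.
  apply/permP => k; case: (unliftP ord0 k) => [k'|] ->; rewrite ?lift_perm_id //.
  by rewrite lift_perm_lift -s0 permE restrK.
by apply: eq_bigl => t; rewrite lift_perm_id eqxx.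
Qed.

Section LinearForms.
Variable n : nat.
Implicit Types (a b : 'I_n -> CC).

Definition lin a : {mpoly CC[n]} := \sum_i a i *: 'X_i.

Definition ip1 a b : CC := \sum_i a i * (b i)^*.

Definition unitv (j : 'I_n) : 'I_n -> CC := fun i => (i == j)%:R.

Lemma lin_unitv j : lin (unitv j) = 'X_j.
Proof.
rewrite /lin (bigD1 j) //= /unitv eqxx scale1r big1 ?addr0 // => i /negbTE ->.
by rewrite scale0r.
Qed.

Lemma lin_add a b : lin (fun i => a i + b i) = lin a + lin b.
Proof. by rewrite /lin -big_split; apply: eq_bigr => i _; rewrite scalerDl. Qed.

Lemma lin_sub a b : lin (fun i => a i - b i) = lin a - lin b.
Proof. by rewrite /lin -sumrB; apply: eq_bigr => i _; rewrite scalerBl. Qed.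

Lemma ip1_unitv j b : ip1 (unitv j) b = (b j)^*.
Proof.
rewrite /ip1 (bigD1 j) //= /unitv eqxx mul1r big1 ?addr0 // => i /negbTE ->.
by rewrite mul0r.
Qed.

Lemma ip1_add a b (c : 'I_n -> CC) : ip1 (fun i => a i + b i) c = ip1 a c + ip1 b c.
Proof. by rewrite /ip1 -big_split; apply: eq_bigr => i _; rewrite mulrDl. Qed.

Lemma mderiv_lin i a : (lin a)^`M(i) = (a i)%:MP.
Proof.
rewrite /lin raddf_sum (bigD1 i) //= big1 ?addr0 => [|j /negbTE ji].
  have UU0 : (U_(i) - U_(i))%MM = 0%MM by apply/mnmP => k; rewrite mnmBE mnm0E subnn.
  by rewrite mderivZ mderivX mnm1E eqxx scale1r UU0 mpolyX0 alg_mpolyC.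
by rewrite mderivZ mderivX mnm1E ji scale0r scaler0.
Qed.

Lemma ip_mul_lin d a f g : ip d.+1 (lin a * f) g = \sum_i a i * ip d f g^`M(i).
Proof.
by rewrite /lin mulr_suml ip_sum; apply: eq_bigr => i _; rewrite -scalerAl ipZ ip_mulX.
Qed.

End LinearForms.

Lemma mderiv_prod (R : comNzRingType) n d (v : 'I_d.+1 -> {mpoly R[n]}) i :
  (\prod_k v k)^`M(i) = \sum_j (v j)^`M(i) * \prod_(k < d) v (lift j k).
Proof.
elim: d v => [|d IH] v; first by rewrite !big_ord1 big_ord0 mulr1.
rewrite big_ord_recl mderivM IH [RHS]big_ord_recl; congr (_ + _).
rewrite mulr_sumr; apply: eq_bigr => j _.
have lift_j0 : lift (lift ord0 j) ord0 = ord0 :> 'I_d.+2 by exact: val_inj.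
rewrite big_ord_recl lift_j0 mulrCA; congr (_ * (_ * _)).
by apply: eq_bigr => k _; congr (v _); apply: val_inj; rewrite /= /bump /= ltnS addnS.
Qed.

(* Induction on d: adjointness turns the first factor on the left into a
   derivative on the right, and the Leibniz rule expands the permanent along
   its first row. *)
Lemma ip_prod_lin n d (a b : 'I_d -> 'I_n -> CC) :
  ip d (\prod_k lin (a k)) (\prod_k lin (b k)) = per (\matrix_(k, l) ip1 (a k) (b l)).
Proof.
rewrite /per; under [RHS]eq_bigr => s _ do under eq_bigr => k _ do rewrite mxE.
elim: d a b => [|d IH] a b.
  rewrite !big_ord0 ip_one (eq_bigr (fun _ => 1)) ?sumr_const ?card_Sn //.
  by move=> s _; rewrite big_ord0.
rewrite big_ord_recl ip_mul_lin sum_perm_lift0.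
have leibniz i : (\prod_k lin (b k))^`M(i)
    = \sum_j (lin (b j))^`M(i) * \prod_(k < d) lin (b (lift j k)).
  exact: mderiv_prod.
have row_expansion j :
    \sum_i a ord0 i * ip d (\prod_(k < d) lin (a (lift ord0 k)))
      ((lin (b j))^`M(i) * \prod_(k < d) lin (b (lift j k)))
    = ip1 (a ord0) (b j) *
      \sum_(t : 'S_d) \prod_(k < d) ip1 (a (lift ord0 k)) (b (lift j (t k))).
  rewrite -(IH (fun k => a (lift ord0 k)) (fun k => b (lift j k))) /ip1 mulr_suml.
  by apply: eq_bigr => i _; rewrite mderiv_lin mul_mpolyC ipZr mulrA.
transitivity (\sum_j \sum_i a ord0 i * ip d (\prod_(k < d) lin (a (lift ord0 k)))
      ((lin (b j))^`M(i) * \prod_(k < d) lin (b (lift j k)))).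
  by rewrite [RHS]exchange_big; apply: eq_bigr => i _; rewrite leibniz ip_sumr mulr_sumr.
apply: eq_bigr => j _; rewrite row_expansion mulr_sumr; apply: eq_bigr => t _.
rewrite big_ord_recl lift_perm_id; congr (_ * _).
by apply: eq_bigr => k _; rewrite lift_perm_lift.
Qed.

Lemma prod_seq_nth (R : comPzRingType) (T : Type) (s : seq T) d
    (x0 : 'I_d -> T) (F : T -> R) :
  size s = d -> \prod_(y <- s) F y = \prod_(k < d) F (nth (x0 k) s k).
Proof.
move=> size_s; subst d; case: s x0 => [|y s] x0; first by rewrite big_nil big_ord0.
rewrite (big_nth y) big_mkord; apply: eq_bigr => k _.
by rewrite (set_nth_default y).
Qed.

Lemma ip_span_neq0 n (E : {set 'I_n * 'I_n}) (K : {ffun edge E -> nat}) m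
    (F g : {mpoly CC[n]}) :
  in_W K m F -> ip m F g != 0 ->
  exists K' : {ffun edge E -> nat}, [/\ sumK K' = m, leK K' K & ip m (H_E K') g != 0].
Proof.
case=> s [sK ->]; rewrite ip_sum.
elim: s sK => [|[c K'] s IH] /=; first by rewrite big_nil eqxx.
case/andP => /andP [leK' /eqP sumK'] sK; rewrite big_cons ipZ.
have [HK'0|] := eqVneq (ip m (H_E K') g) 0; last by exists K'.
by rewrite HK'0 mulr0 add0r; exact: IH.
Qed.

Section Graph.
Variables (n : nat) (E : {set 'I_n * 'I_n}).
Hypothesis simpleE : simple_graph E.

Local Notation d := #|{: edge E}|.

Lemma card_edge : d = #|E|.
Proof. by rewrite card_sig; apply: eq_card. Qed.

Lemma edge_ends_neq (e : edge E) : (val e).1 != (val e).2.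
Proof. by have := simpleE (valP e); apply: contraL => /eqP ->; rewrite ltnn. Qed.

Lemma edge_of_ends (r f : edge E) :
  incident (val r).1 (val f) -> incident (val r).2 (val f) -> r = f.
Proof.
have := simpleE (valP r); have := simpleE (valP f).
case: r f => [[a b] ?] [[c e] ?] /= lt_ce lt_ab; rewrite /incident /=.
case/orP => /eqP ca; case/orP => /eqP eb; subst; try by apply: val_inj.
- by move: lt_ab; rewrite ltnn.
- by move: (ltn_trans lt_ab lt_ce); rewrite ltnn.
- by move: lt_ab; rewrite ltnn.
Qed.

Lemma cG_incident (r f : edge E) :
  (cG r f)%:~R = (incident (val r).1 (val f))%:R - (incident (val r).2 (val f))%:R :> CC.
Proof.
rewrite /cG; have [->|ne_fr] := eqVneq f r; first by rewrite /incident !eqxx orbT subrr.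
case inc1: (incident _ (val f)); case inc2: (incident (val r).2 (val f));
  rewrite /= ?subr0 ?sub0r ?subrr //.
by case/eqP: ne_fr; rewrite (edge_of_ends inc1 inc2).
Qed.

Lemma incident_nat (f : edge E) (v : 'I_n) :
  ((val f).1 == v)%:R + ((val f).2 == v)%:R = (incident v (val f))%:R :> CC.
Proof.
rewrite /incident; have [<-|_] := eqVneq (val f).1 v; last by rewrite /= add0r.
by rewrite eq_sym (negbTE (edge_ends_neq f)) /= addr0.
Qed.

Definition col_edge (K : {ffun edge E -> nat}) (k : 'I_d) : edge E :=
  nth (enum_val k) (col_edges K) k.

Lemma size_col_edges (K : {ffun edge E -> nat}) : size (col_edges K) = sumK K.
Proof.
rewrite /col_edges size_flatten /shape -map_comp sumnE big_map /sumK big_enum /=.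
by apply: eq_bigr => e _; rewrite /= size_nseq.
Qed.

Lemma prod_pow_col_edges (R : comPzRingType) (K : {ffun edge E -> nat})
    (F : edge E -> R) :
  sumK K = d -> \prod_e F e ^+ K e = \prod_(k < d) F (col_edge K k).
Proof.
move=> sumKd; have size_col : size (col_edges K) = d by rewrite size_col_edges.
rewrite /col_edge -(prod_seq_nth (fun k : 'I_d => enum_val k) F size_col).
rewrite /col_edges big_flatten /= big_map big_enum /=.
by apply: eq_bigr => e _; rewrite big_nseq iter_mulr_1.
Qed.

Lemma prod_edges (R : comPzRingType) (F : edge E -> R) :
  \prod_e F e = \prod_(k < d) F (enum_val k).
Proof. exact: big_enum_val. Qed.

Definition hvec (e : edge E) : 'I_n -> CC :=
  fun v => unitv (val e).1 v + unitv (val e).2 v.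
Definition qvec (e : edge E) : 'I_n -> CC :=
  fun v => unitv (val e).1 v - unitv (val e).2 v.

Definition pvec (r : edge E) : 'I_d -> CC :=
  fun v => (incident (val r).1 (val (enum_val v)))%:R
         - (incident (val r).2 (val (enum_val v)))%:R.

Lemma ip1_hvec_qvec (f r : edge E) : ip1 (hvec f) (qvec r) = (cG r f)%:~R.
Proof.
rewrite /hvec ip1_add !ip1_unitv /qvec /unitv !rmorphB !rmorph_nat.
by rewrite cG_incident -!incident_nat opprD addrACA.
Qed.

Lemma ip1_unitv_pvec (f r : edge E) : ip1 (unitv (enum_rank f)) (pvec r) = (cG r f)%:~R.
Proof. by rewrite ip1_unitv cG_incident /pvec enum_rankK rmorphB !rmorph_nat. Qed.

Lemma H_E_prod_lin (K : {ffun edge E -> nat}) :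
  sumK K = d -> H_E K = \prod_(k < d) lin (hvec (col_edge K k)).
Proof.
move=> sumKd; rewrite /H_E prod_pow_col_edges //; apply: eq_bigr => k _.
by rewrite lin_add !lin_unitv.
Qed.

Lemma Q_E_prod_lin : Q_E E = \prod_(k < d) lin (qvec (enum_val k)).
Proof. by rewrite /Q_E prod_edges; apply: eq_bigr => k _; rewrite lin_sub !lin_unitv. Qed.

Lemma monE_prod_lin (K : {ffun edge E -> nat}) : sumK K = d ->
  'X_[monE K] = \prod_(k < d) lin (unitv (enum_rank (col_edge K k))) :> {mpoly CC[d]}.
Proof.
move=> sumKd; rewrite mpolyXE_id (reindex (@enum_rank _)) /=; last first.
  exact: onW_bij (@enum_rank_bij _).
under eq_bigr => e _ do rewrite mnmE enum_rankK.
by rewrite prod_pow_col_edges //; apply: eq_bigr => k _; rewrite lin_unitv.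
Qed.

Lemma mdeg_monE (K : {ffun edge E -> nat}) : mdeg (monE K) = sumK K.
Proof.
rewrite mdegE /sumK (reindex (@enum_rank _)) /=; last exact: onW_bij (@enum_rank_bij _).
by apply: eq_bigr => e _; rewrite mnmE enum_rankK.
Qed.

Lemma P_G_prod_lin :
  map_mpoly (fun z : int => z%:~R : CC) (P_G E) = \prod_(k < d) lin (pvec (enum_val k)).
Proof.
have sum_incident (v : 'I_n) :
    \sum_(f : edge E | incident v (val f)) 'X_(enum_rank f)
    = lin (fun w => (incident v (val (enum_val w)))%:R) :> {mpoly CC[d]}.
  rewrite /lin (reindex (@enum_rank _)) /=; last exact: onW_bij (@enum_rank_bij _).
  rewrite big_mkcond; apply: eq_bigr => f _; rewrite enum_rankK.
  by case: ifP => _; rewrite ?scale1r ?scale0r.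
rewrite /P_G rmorph_prod prod_edges; apply: eq_bigr => k _.
rewrite rmorphB !rmorph_sum /pvec lin_sub -!sum_incident.
by congr (_ - _); apply: eq_bigr => f _; exact: map_mpolyX.
Qed.

Lemma per_gram_CG (K : {ffun edge E -> nat}) :
  per (\matrix_(k, l) (cG (enum_val l) (col_edge K k))%:~R : 'M[CC]_d)
  = (per (C_GK K))%:~R.
Proof.
rewrite -(per_map (intr : int -> CC)) -per_tr; congr per; apply/matrixP => k l.
by rewrite !mxE.
Qed.

Lemma ip_H_E_Q_E (K : {ffun edge E -> nat}) :
  sumK K = #|E| -> ip #|E| (H_E K) (Q_E E) = (per (C_GK K))%:~R.
Proof.
rewrite -card_edge => sumKd.
rewrite H_E_prod_lin // Q_E_prod_lin ip_prod_lin -per_gram_CG.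
by congr per; apply/matrixP => k l; rewrite !mxE ip1_hvec_qvec.
Qed.

Lemma coef_P_G (K : {ffun edge E -> nat}) :
  sumK K = #|E| ->
  (mfact (monE K))%:R * ((P_G E)@_(monE K))%:~R = (per (C_GK K))%:~R :> CC.
Proof.
rewrite -card_edge => sumKd; have degK := etrans (mdeg_monE K) sumKd.
have := ip_monomial (map_mpoly (fun z : int => z%:~R : CC) (P_G E)) degK.
rewrite mcoeff_map_mpoly /= rmorph_int => <-.
rewrite monE_prod_lin // P_G_prod_lin ip_prod_lin -per_gram_CG.
by congr per; apply/matrixP => k l; rewrite !mxE ip1_unitv_pvec.
Qed.

End Graph.

Theorem lemma2p1 (n : nat) (E : {set 'I_n * 'I_n}) :
  simple_graph E -> nice E ->
  forall K : {ffun edge E -> nat},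
  [<-> sufficient K;
       exists K' : {ffun edge E -> nat},
         [/\ sumK K' = #|E|, leK K' K & ip #|E| (H_E K') (Q_E E) != 0];
       exists F : {mpoly CC[n]}, in_W K #|E| F /\ ip #|E| F (Q_E E) != 0;
       exists K' : {ffun edge E -> nat},
         [/\ sumK K' = #|E|, leK K' K & per (C_GK K') != 0]].
Proof.
move=> simpleE _ K.
have per_C_GK (K' : {ffun edge E -> nat}) :
    ((per (C_GK K'))%:~R != 0 :> CC) = (per (C_GK K') != 0) by rewrite intr_eq0.
have coefP (K' : {ffun edge E -> nat}) : sumK K' = #|E| ->
    ((P_G E)@_(monE K') != 0) = (per (C_GK K') != 0).
  move=> sumK'; rewrite -per_C_GK -coef_P_G // mulf_eq0 negb_or mfact_neq0.
  by rewrite intr_eq0.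
have ipHQ (K' : {ffun edge E -> nat}) : sumK K' = #|E| ->
    (ip #|E| (H_E K') (Q_E E) != 0) = (per (C_GK K') != 0).
  by move=> sumK'; rewrite ip_H_E_Q_E // per_C_GK.
tfae.
- case=> K' [sumK' leK' nz]; exists K'; split => //.
  by rewrite ipHQ // -coefP.
- case=> K' [sumK' leK' nz]; exists (H_E K'); split => //.
  exists [:: (1, K')]; split; first by rewrite /= leK' sumK' eqxx.
  by rewrite big_seq1 scale1r.
- case=> F [inW nz]; have [K' [sumK' leK' nzK']] := ip_span_neq0 inW nz.
  by exists K'; split => //; rewrite -ipHQ.
- by case=> K' [sumK' leK' nz]; exists K'; split => //; rewrite coefP.
Qed.
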